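(* Let $x_{m_1}<\dots<x_2<x_1<w<y_1<y_2<\dots<y_{m_2}$ be real numbers, and let $\mathfrak x_1,\dots,\mathfrak x_{m_1-1}$, $\mathfrak y_1,\dots,\mathfrak y_{m_2-1}$, $\mathfrak w$ be real numbers with $\mathfrak w\neq0$. For $\zeta\in\mathbb C$ with $\operatorname{Im}\zeta\ge0$ define $\mu_i=\operatorname{angle}(\zeta-x_{i+1},\zeta-x_i)$ ($1\le i\le m_1-1$), $\nu_i=\operatorname{angle}(\zeta-y_i,\zeta-y_{i+1})$ ($1\le i\le m_2-1$), and $\alpha=\operatorname{angle}(\zeta-x_1,\zeta-w)$. Then there exists $\varepsilon>0$ such that for all $\zeta$ with $\operatorname{Im}\zeta\ge0$ and $0<|\zeta-w|<\varepsilon$, $$\sum_{i=1}^{m_1-1}\mathfrak x_i\mu_i+\mathfrak w\alpha+\sum_{i=1}^{m_2-1}\mathfrak y_i\nu_i=0$$ holds if and only if $\zeta\in\mathbb R$ and $\zeta>w$. The same statement holds if $\alpha$ is replaced by $\tilde\alpha=\operatorname{angle}(\zeta-w,\zeta-y_1)$ and the condition $\zeta>w$ is replaced by $\zeta<w$.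
   Context: For nonzero complex numbers $u,v$, $\operatorname{angle}(u,v)$ denotes the angle from the vector $u$ to the vector $v$, i.e. $\arg(v/u)$; in all uses above (real points $a<b$ and $\operatorname{Im}\zeta\ge0$), $\operatorname{angle}(\zeta-a,\zeta-b)\in[0,\pi]$ is the angle at $\zeta$ subtended by the segment $[a,b]$. *)

From Stdlib Require Import Reals.
From Coquelicot Require Import Coquelicot.
Open Scope R_scope.

(* Principal argument of a complex number, with values in (-PI, PI]
   (Carg 0 = 0, irrelevant here). *)
Definition Carg (z : C) : R :=
  let a := Re z in let b := Im z in
  if Rlt_dec 0 a then atan (b / a)
  else if Rlt_dec a 0 then
    (if Rle_dec 0 b then atan (b / a) + PI else atan (b / a) - PI)
  else if Rlt_dec 0 b then PI / 2
  else if Rlt_dec b 0 then - (PI / 2)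
  else 0.

Definition angle (u v : C) : R := Carg (Cdiv v u).

Fixpoint sum1 (k : nat) (f : nat -> R) : R :=
  match k with
  | O => 0
  | S k' => sum1 k' f + f k
  end.

(* Seen from a point ζ near w, a segment [p, q] of the real line at positive
   distance from w subtends an angle of order Im ζ, whereas the segment having w
   as an endpoint subtends an angle of at least Im ζ / (8 ε) when |ζ - w| < ε.
   For ε small the w-term therefore dominates the weighted sum off the real axis,
   so the sum cannot vanish there.  On the real axis the remote angles are 0 and
   the w-term is 0 or π according to the side of w on which ζ lies. *)

From Stdlib Require Import Reals Lra Psatz.
From Coquelicot Require Import Coquelicot.
Open Scope R_scope.

Lemma atan_pos_bounds t : 0 < t -> t / (1 + t ^ 2) <= atan t <= t.
Proof.
  intros Ht.
  destruct (MVT_cor2 atan (fun s => / (1 + s ^ 2)) 0 t Ht) as [c [Hc Hc0t]].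
  { intros c _. apply derivable_pt_lim_atan. }
  rewrite atan_0, !Rminus_0_r in Hc. rewrite Hc.
  assert (H1c : 0 < 1 + c ^ 2) by nra.
  split.
  - unfold Rdiv. rewrite Rmult_comm. apply Rmult_le_compat_r; [lra|].
    apply Rinv_le_contravar; nra.
  - assert (/ (1 + c ^ 2) <= 1) by (rewrite <- Rinv_1; apply Rinv_le_contravar; nra).
    nra.
Qed.

Lemma atan_pos t : 0 < t -> 0 < atan t.
Proof.
  intros Ht. apply Rlt_le_trans with (t / (1 + t ^ 2)); [|apply atan_pos_bounds, Ht].
  apply Rdiv_lt_0_compat; nra.
Qed.

Lemma Rabs_atan_le t : Rabs (atan t) <= Rabs t.
Proof.
  destruct (Rtotal_order t 0) as [Ht|[->|Ht]].
  - pose proof (atan_pos_bounds (- t) ltac:(lra)) as [_ Hle].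
    pose proof (atan_pos (- t) ltac:(lra)).
    rewrite atan_opp in *. rewrite !Rabs_left1; lra.
  - rewrite atan_0; lra.
  - pose proof (atan_pos_bounds t Ht) as [_ Hle]. pose proof (atan_pos t Ht).
    rewrite !Rabs_right; lra.
Qed.

Lemma Rabs_Carg_le z : 0 < Re z -> Rabs (Carg z) <= Rabs (Im z) / Re z.
Proof.
  intros Ha. unfold Carg. destruct (Rlt_dec 0 (Re z)); [|lra].
  eapply Rle_trans; [apply Rabs_atan_le|].
  unfold Rdiv. rewrite Rabs_mult, Rabs_inv, (Rabs_right (Re z)); lra.
Qed.

Lemma Carg_ge z : 0 < Im z -> Im z / (Rabs (Re z) + Im z) / 2 <= Carg z.
Proof.
  intros Hb. set (a := Re z). set (b := Im z). fold b in Hb.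
  pose proof (Rabs_pos a).
  set (s := b / (Rabs a + b)).
  assert (Hs : 0 < s <= 1).
  { unfold s; split; [apply Rdiv_lt_0_compat; lra|].
    apply Rmult_le_reg_r with (Rabs a + b); [lra|].
    unfold Rdiv; rewrite Rmult_assoc, Rinv_l; lra. }
  assert (Hatan : s / 2 <= atan s).
  { apply Rle_trans with (s / (1 + s ^ 2)); [|apply atan_pos_bounds; lra].
    unfold Rdiv. apply Rmult_le_compat_l; [lra|]. apply Rinv_le_contravar; nra. }
  pose proof (atan_bound s). pose proof PI2_1.
  unfold Carg; fold a b.
  destruct (Rlt_dec 0 a).
  - assert (s <= b / a).
    { unfold s. rewrite Rabs_right by lra. unfold Rdiv.
      apply Rmult_le_compat_l; [lra|]. apply Rinv_le_contravar; lra. }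
    destruct (Req_dec s (b / a)) as [<-|]; [lra|].
    pose proof (atan_increasing s (b / a) ltac:(lra)). lra.
  - destruct (Rlt_dec a 0).
    + destruct (Rle_dec 0 b); [|lra]. pose proof (atan_bound (b / a)). lra.
    + destruct (Rlt_dec 0 b); lra.
Qed.

Lemma Carg_neg_real z : Re z < 0 -> Im z = 0 -> Carg z = PI.
Proof.
  intros Ha Hb. unfold Carg. rewrite Hb.
  destruct (Rlt_dec 0 (Re z)); [lra|]. destruct (Rlt_dec (Re z) 0); [|lra].
  destruct (Rle_dec 0 0); [|lra]. unfold Rdiv; rewrite Rmult_0_l, atan_0; lra.
Qed.

Definition subtended (z : C) (p q : R) : R :=
  angle (Cminus z (RtoC p)) (Cminus z (RtoC q)).

Lemma Re_Cdiv_Cminus z p q : Re (Cdiv (Cminus z (RtoC q)) (Cminus z (RtoC p))) =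
  ((Re z - q) * (Re z - p) + Im z ^ 2) / ((Re z - p) ^ 2 + Im z ^ 2).
Proof.
  destruct z as [a b]. simpl. rewrite Ropp_0, Rplus_0_r.
  unfold Rminus, Rdiv. ring.
Qed.

Lemma Im_Cdiv_Cminus z p q : Im (Cdiv (Cminus z (RtoC q)) (Cminus z (RtoC p))) =
  Im z * (q - p) / ((Re z - p) ^ 2 + Im z ^ 2).
Proof.
  destruct z as [a b]. simpl. rewrite Ropp_0, Rplus_0_r.
  unfold Rminus, Rdiv. ring.
Qed.

Lemma Rabs_subtended_le z p q : 0 <= Im z -> 0 < (Re z - p) * (Re z - q) ->
  Rabs (subtended z p q) <= Im z * Rabs (q - p) / ((Re z - p) * (Re z - q)).
Proof.
  intros Hb Hpq. unfold subtended, angle.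
  set (a := Re z) in *. set (b := Im z) in *.
  assert (HD : 0 < (a - p) ^ 2 + b ^ 2).
  { assert (a - p <> 0) by (intro E; rewrite E in Hpq; lra). nra. }
  assert (HRe : 0 < Re (Cdiv (Cminus z (RtoC q)) (Cminus z (RtoC p)))).
  { rewrite Re_Cdiv_Cminus. apply Rdiv_lt_0_compat; fold a b; nra. }
  eapply Rle_trans; [apply Rabs_Carg_le, HRe|].
  rewrite Re_Cdiv_Cminus, Im_Cdiv_Cminus. fold a b.
  replace (Rabs (b * (q - p) / ((a - p) ^ 2 + b ^ 2)) /
     (((a - q) * (a - p) + b ^ 2) / ((a - p) ^ 2 + b ^ 2)))
   with (b * Rabs (q - p) / ((a - q) * (a - p) + b ^ 2)).
  2:{ unfold Rdiv. rewrite !Rabs_mult, Rabs_inv, (Rabs_right b),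
        (Rabs_right ((a - p) ^ 2 + b ^ 2)) by lra.
      field. split; nra. }
  unfold Rdiv. apply Rmult_le_compat_l.
  - apply Rmult_le_pos; [lra | apply Rabs_pos].
  - apply Rinv_le_contravar; nra.
Qed.

Lemma subtended_ge z p q : 0 < Im z -> p < q ->
  Im z * (q - p) / (Rabs ((Re z - q) * (Re z - p) + Im z ^ 2) + Im z * (q - p)) / 2
  <= subtended z p q.
Proof.
  intros Hb Hpq. unfold subtended, angle.
  pose proof (Carg_ge (Cdiv (Cminus z (RtoC q)) (Cminus z (RtoC p)))) as H.
  rewrite Re_Cdiv_Cminus, Im_Cdiv_Cminus in H.
  set (a := Re z) in *. set (b := Im z) in *.
  assert (HD : 0 < (a - p) ^ 2 + b ^ 2)
    by (pose proof (pow_lt b 2 Hb); pose proof (pow2_ge_0 (a - p)); lra).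
  set (D := (a - p) ^ 2 + b ^ 2) in *.
  pose proof (Rabs_pos ((a - q) * (a - p) + b ^ 2)).
  replace (b * (q - p) / (Rabs ((a - q) * (a - p) + b ^ 2) + b * (q - p))) with
    (b * (q - p) / D / (Rabs (((a - q) * (a - p) + b ^ 2) / D) + b * (q - p) / D)).
  - apply H. apply Rdiv_lt_0_compat; nra.
  - unfold Rdiv. rewrite Rabs_mult, Rabs_inv, (Rabs_right D) by lra.
    field. split; nra.
Qed.

Lemma subtended_real_outside z p q : Im z = 0 -> 0 < (Re z - p) * (Re z - q) ->
  subtended z p q = 0.
Proof.
  intros Hb Hpq. apply Rabs_eq_0, Rle_antisym; [|apply Rabs_pos].
  eapply Rle_trans; [apply Rabs_subtended_le; lra|].
  rewrite Hb. unfold Rdiv. rewrite !Rmult_0_l. lra.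
Qed.

Lemma subtended_real_inside z p q : Im z = 0 -> (Re z - p) * (Re z - q) < 0 ->
  subtended z p q = PI.
Proof.
  intros Hb Hpq. unfold subtended, angle. apply Carg_neg_real.
  - rewrite Re_Cdiv_Cminus, Hb.
    assert (Re z - p <> 0) by (intro E; rewrite E in Hpq; lra).
    unfold Rdiv. apply Rmult_neg_pos; [nra|]. apply Rinv_0_lt_compat. nra.
  - rewrite Im_Cdiv_Cminus, Hb. unfold Rdiv. ring.
Qed.

Lemma subtended_ge_near_end z p q eps : p < q -> eps <= q - p -> 0 < Im z <= eps ->
  Rabs (Re z - p) <= eps \/ Rabs (Re z - q) <= eps ->
  Im z / (8 * eps) <= subtended z p q.
Proof.
  intros Hpq Heps Hb Hend. eapply Rle_trans; [|apply subtended_ge; lra].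
  set (a := Re z) in *. set (b := Im z) in *.
  assert (Hprod : Rabs ((a - q) * (a - p)) <= eps * (eps + (q - p))).
  { rewrite Rabs_mult.
    destruct Hend as [Hp|Hq].
    - assert (Rabs (a - q) <= eps + (q - p)).
      { apply Rabs_le_between' in Hp. apply Rabs_le. lra. }
      rewrite Rmult_comm. apply Rmult_le_compat; auto using Rabs_pos.
    - assert (Rabs (a - p) <= eps + (q - p)).
      { apply Rabs_le_between' in Hq. apply Rabs_le. lra. }
      apply Rmult_le_compat; auto using Rabs_pos. }
  set (den := Rabs ((a - q) * (a - p) + b ^ 2) + b * (q - p)).
  assert (Hden : den <= 4 * eps * (q - p)).
  { unfold den. pose proof (Rabs_triang ((a - q) * (a - p)) (b ^ 2)).
    rewrite (Rabs_right (b ^ 2)) in H by nra. nra. }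
  assert (Hden0 : 0 < den) by (unfold den; pose proof (Rabs_pos ((a - q) * (a - p) + b ^ 2)); nra).
  apply Rle_trans with (b * (q - p) / (4 * eps * (q - p)) / 2).
  - right. field. lra.
  - unfold Rdiv. apply Rmult_le_compat_r; [lra|]. apply Rmult_le_compat_l; [nra|].
    apply Rinv_le_contravar; lra.
Qed.

Lemma sum1_Rabs_le k f g c : (forall i, (1 <= i <= k)%nat -> Rabs (f i) <= c * g i) ->
  Rabs (sum1 k f) <= c * sum1 k g.
Proof.
  induction k as [|k IHk]; intros Hfg; simpl.
  - rewrite Rabs_R0; lra.
  - eapply Rle_trans; [apply Rabs_triang|].
    rewrite Rmult_plus_distr_l. apply Rplus_le_compat.
    + apply IHk. intros i Hi; apply Hfg; lia.
    + apply Hfg; lia.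
Qed.

Lemma Rabs_sum1_subtended_le k (f p q : nat -> R) z d : 0 <= Im z -> 0 < d ->
  (forall i, (1 <= i <= k)%nat -> d * d <= (Re z - p i) * (Re z - q i)) ->
  Rabs (sum1 k (fun i => f i * subtended z (p i) (q i)))
  <= Im z * sum1 k (fun i => Rabs (f i) * (Rabs (q i - p i) / (d * d))).
Proof.
  intros Hb Hd Hfar. apply sum1_Rabs_le. intros i Hi.
  specialize (Hfar i Hi).
  pose proof (Rabs_subtended_le z (p i) (q i) Hb ltac:(nra)) as Hangle.
  assert (Im z * Rabs (q i - p i) / ((Re z - p i) * (Re z - q i))
          <= Im z * Rabs (q i - p i) / (d * d)).
  { unfold Rdiv. apply Rmult_le_compat_l; [pose proof (Rabs_pos (q i - p i)); nra|].
    apply Rinv_le_contravar; nra. }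
  rewrite Rabs_mult.
  replace (Im z * (Rabs (f i) * (Rabs (q i - p i) / (d * d))))
    with (Rabs (f i) * (Im z * Rabs (q i - p i) / (d * d))) by (unfold Rdiv; ring).
  apply Rmult_le_compat_l; [apply Rabs_pos|lra].
Qed.

Lemma increasing_ge_first (u : nat -> R) n :
  (forall i, (1 <= i)%nat -> (i < n)%nat -> u i < u (S i)) ->
  forall i, (1 <= i <= n)%nat -> u 1%nat <= u i.
Proof.
  intros Hu i Hi. induction i as [|i IHi]; [lia|].
  destruct (Nat.eq_dec i 0) as [->|]; [lra|].
  pose proof (Hu i ltac:(lia) ltac:(lia)). pose proof (IHi ltac:(lia)). lra.
Qed.

Lemma Rabs_remote_sums_le m1 m2 (x y : nat -> R) w fx fy d z
  (Hx : forall i : nat, (1 <= i)%nat -> (i < m1)%nat -> x (S i) < x i)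
  (Hy : forall i : nat, (1 <= i)%nat -> (i < m2)%nat -> y i < y (S i))
  (Hd : 0 < d) (Hdx : 2 * d <= w - x 1%nat) (Hdy : 2 * d <= y 1%nat - w)
  (Hb : 0 <= Im z) (Ha : Rabs (Re z - w) < d) :
  Rabs (sum1 (m1 - 1) (fun i => fx i * subtended z (x (S i)) (x i))
        + sum1 (m2 - 1) (fun i => fy i * subtended z (y i) (y (S i))))
  <= Im z * (sum1 (m1 - 1) (fun i => Rabs (fx i) * (Rabs (x i - x (S i)) / (d * d)))
             + sum1 (m2 - 1) (fun i => Rabs (fy i) * (Rabs (y (S i) - y i) / (d * d)))).
Proof.
  apply Rabs_lt_between' in Ha.
  eapply Rle_trans; [apply Rabs_triang|]. rewrite Rmult_plus_distr_l.
  apply Rplus_le_compat; apply Rabs_sum1_subtended_le; auto; intros i Hi.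
  - pose proof (increasing_ge_first (fun i => - x i) m1
      (fun i H1 H2 => Ropp_lt_contravar _ _ (Hx i H1 H2)) i ltac:(lia)).
    pose proof (Hx i ltac:(lia) ltac:(lia)). nra.
  - pose proof (increasing_ge_first y m2 Hy i ltac:(lia)).
    pose proof (Hy i ltac:(lia) ltac:(lia)). nra.
Qed.

Lemma Cmod_Cminus_RtoC_lt z w eps : 0 < Cmod (Cminus z (RtoC w)) < eps ->
  (Re z <> w \/ Im z <> 0) /\ Rabs (Re z - w) < eps /\ Rabs (Im z) < eps.
Proof.
  intros [Hpos Hlt]. pose proof (Rmax_Cmod (Cminus z (RtoC w))) as Hmax.
  pose proof (Rmax_l (Rabs (fst (Cminus z (RtoC w)))) (Rabs (snd (Cminus z (RtoC w))))).
  pose proof (Rmax_r (Rabs (fst (Cminus z (RtoC w)))) (Rabs (snd (Cminus z (RtoC w))))).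
  destruct z as [a b]. simpl in *. rewrite Ropp_0, Rplus_0_r in *.
  change (a + - w) with (a - w) in *.
  split; [|split; lra].
  destruct (Req_dec a w) as [->|]; [|now left].
  right. intros ->.
  assert (Hz : Cminus (w, 0) (RtoC w) = 0) by (apply injective_projections; simpl; ring).
  rewrite Hz, Cmod_0 in Hpos. lra.
Qed.

Lemma Rplus_dominant_neq0 S c A b C0 eps : 0 < b -> 0 < eps ->
  Rabs S <= C0 * b -> b / (8 * eps) <= A -> 8 * eps * (C0 + 1) <= Rabs c ->
  S + c * A <> 0.
Proof.
  intros Hb Heps HS HA Hc.
  assert (HC0 : 0 <= C0) by (pose proof (Rabs_pos S); nra).
  assert (HbA : b <= 8 * eps * A).
  { apply Rmult_le_compat_l with (r := 8 * eps) in HA; [|lra].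
    replace (8 * eps * (b / (8 * eps))) with b in HA by (field; lra). exact HA. }
  assert (HcA : (C0 + 1) * b <= Rabs (c * A)).
  { rewrite Rabs_mult, (Rabs_right A) by nra.
    apply Rle_trans with ((C0 + 1) * (8 * eps * A)); [nra|].
    rewrite <- Rmult_assoc. apply Rmult_le_compat_r; nra. }
  intros E. replace (c * A) with (- S) in HcA by lra. rewrite Rabs_Ropp in HcA. nra.
Qed.

Section NearEndpoint.

Variables (Sx Sy : C -> R) (fw C0 w eps : R).
Hypothesis Hfw : fw <> 0.
Hypothesis Heps : 0 < eps.
Hypothesis Hdom : 8 * eps * (C0 + 1) <= Rabs fw.
Hypothesis Hremote : forall z, 0 <= Im z -> Rabs (Re z - w) < eps ->
  Rabs (Sx z + Sy z) <= C0 * Im z.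

Lemma near_end_sum_eq0_iff p q z : p < q -> eps <= q - p -> w = p \/ w = q ->
  0 <= Im z -> 0 < Cmod (Cminus z (RtoC w)) < eps ->
  Sx z + fw * subtended z p q + Sy z = 0 <-> Im z = 0 /\ 0 < (Re z - p) * (Re z - q).
Proof.
  intros Hpq Hlen Hend Hb Hz.
  destruct (Cmod_Cminus_RtoC_lt z w eps Hz) as [Hne [Ha Hbe]].
  pose proof (Hremote z Hb Ha) as HS.
  apply Rabs_lt_between' in Ha. rewrite Rabs_right in Hbe by lra.
  destruct Hb as [Hb|Hb].
  - split; [|intros [? _]; lra].
    assert (Hnear : Im z / (8 * eps) <= subtended z p q).
    { apply subtended_ge_near_end; [lra|lra|lra|].
      destruct Hend as [<- | <-]; [left|right]; apply Rabs_le; lra. }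
    intros E. exfalso. apply (Rplus_dominant_neq0 _ _ _ _ _ _ Hb Heps HS Hnear Hdom). lra.
  - symmetry in Hb. rewrite Hb, Rmult_0_r in HS.
    assert (HS0 : Sx z + Sy z = 0) by (apply Rabs_eq_0, Rle_antisym; auto using Rabs_pos).
    destruct (Rtotal_order 0 ((Re z - p) * (Re z - q))) as [Hout|[Hon|Hin]].
    + rewrite subtended_real_outside by auto. split; [intros; split; auto|]; lra.
    + exfalso. symmetry in Hon. apply Rmult_integral in Hon.
      destruct Hne as [Hne|]; [|lra]. destruct Hend, Hon; lra.
    + rewrite subtended_real_inside by auto. split; [|intros [_ ?]; lra].
      intros E. exfalso. pose proof PI_RGT_0. apply Hfw, (Rmult_eq_reg_r PI); lra.
Qed.

Lemma near_right_end_sum_eq0_iff p : p < w -> eps <= w - p ->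
  forall z, 0 <= Im z -> 0 < Cmod (Cminus z (RtoC w)) < eps ->
  Sx z + fw * subtended z p w + Sy z = 0 <-> Im z = 0 /\ Re z > w.
Proof.
  intros Hpw Hlen z Hb Hz. rewrite near_end_sum_eq0_iff by auto.
  destruct (Cmod_Cminus_RtoC_lt z w eps Hz) as [_ [Ha _]]. apply Rabs_lt_between' in Ha.
  split; intros [? ?]; split; nra.
Qed.

Lemma near_left_end_sum_eq0_iff q : w < q -> eps <= q - w ->
  forall z, 0 <= Im z -> 0 < Cmod (Cminus z (RtoC w)) < eps ->
  Sx z + fw * subtended z w q + Sy z = 0 <-> Im z = 0 /\ Re z < w.
Proof.
  intros Hwq Hlen z Hb Hz. rewrite near_end_sum_eq0_iff by auto.
  destruct (Cmod_Cminus_RtoC_lt z w eps Hz) as [_ [Ha _]]. apply Rabs_lt_between' in Ha.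
  split; intros [? ?]; split; nra.
Qed.

End NearEndpoint.

Theorem lemma2p3
  (m1 m2 : nat) (x y : nat -> R) (w : R)
  (fx fy : nat -> R) (fw : R)
  (Hm1 : (1 <= m1)%nat) (Hm2 : (1 <= m2)%nat)
  (Hx : forall i : nat, (1 <= i)%nat -> (i < m1)%nat -> x (S i) < x i)
  (Hx1 : x 1%nat < w) (Hy1 : w < y 1%nat)
  (Hy : forall i : nat, (1 <= i)%nat -> (i < m2)%nat -> y i < y (S i))
  (Hfw : fw <> 0) :
  (exists eps : R, 0 < eps /\
     forall z : C, 0 <= Im z -> 0 < Cmod (Cminus z (RtoC w)) < eps ->
       (sum1 (m1 - 1) (fun i => fx i * angle (Cminus z (RtoC (x (S i)))) (Cminus z (RtoC (x i))))
        + fw * angle (Cminus z (RtoC (x 1%nat))) (Cminus z (RtoC w))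
        + sum1 (m2 - 1) (fun i => fy i * angle (Cminus z (RtoC (y i))) (Cminus z (RtoC (y (S i)))))
        = 0
        <-> (Im z = 0 /\ Re z > w)))
  /\
  (exists eps : R, 0 < eps /\
     forall z : C, 0 <= Im z -> 0 < Cmod (Cminus z (RtoC w)) < eps ->
       (sum1 (m1 - 1) (fun i => fx i * angle (Cminus z (RtoC (x (S i)))) (Cminus z (RtoC (x i))))
        + fw * angle (Cminus z (RtoC w)) (Cminus z (RtoC (y 1%nat)))
        + sum1 (m2 - 1) (fun i => fy i * angle (Cminus z (RtoC (y i))) (Cminus z (RtoC (y (S i)))))
        = 0
        <-> (Im z = 0 /\ Re z < w))).
Proof.
  pose (d := Rmin (w - x 1%nat) (y 1%nat - w) / 2).
  assert (Hd : 0 < d) by (unfold d; apply Rmin_case; lra).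
  assert (Hdx : 2 * d <= w - x 1%nat)
    by (unfold d; pose proof (Rmin_l (w - x 1%nat) (y 1%nat - w)); lra).
  assert (Hdy : 2 * d <= y 1%nat - w)
    by (unfold d; pose proof (Rmin_r (w - x 1%nat) (y 1%nat - w)); lra).
  pose (C0 := sum1 (m1 - 1) (fun i => Rabs (fx i) * (Rabs (x i - x (S i)) / (d * d)))
            + sum1 (m2 - 1) (fun i => Rabs (fy i) * (Rabs (y (S i) - y i) / (d * d)))).
  assert (HC0 : 0 < 8 * (Rabs C0 + 1)) by (pose proof (Rabs_pos C0); lra).
  pose (eps := Rmin d (Rabs fw / (8 * (Rabs C0 + 1)))).
  assert (Heps : 0 < eps).
  { apply Rmin_case; [lra|]. apply Rdiv_lt_0_compat; [apply Rabs_pos_lt|]; auto. }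
  assert (Hepsd : eps <= d) by apply Rmin_l.
  assert (Hdom : 8 * eps * (Rabs C0 + 1) <= Rabs fw).
  { assert (Hle : eps <= Rabs fw / (8 * (Rabs C0 + 1))) by apply Rmin_r.
    apply Rmult_le_compat_r with (r := 8 * (Rabs C0 + 1)) in Hle; [|lra].
    replace (Rabs fw / (8 * (Rabs C0 + 1)) * (8 * (Rabs C0 + 1))) with (Rabs fw) in Hle
      by (field; lra).
    lra. }
  assert (Hremote : forall z, 0 <= Im z -> Rabs (Re z - w) < eps ->
    Rabs (sum1 (m1 - 1) (fun i => fx i * subtended z (x (S i)) (x i))
          + sum1 (m2 - 1) (fun i => fy i * subtended z (y i) (y (S i))))
    <= Rabs C0 * Im z).
  { intros z Hb Ha.
    eapply Rle_trans; [apply (Rabs_remote_sums_le m1 m2 x y w fx fy d z); auto; lra|].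
    rewrite Rmult_comm. apply Rmult_le_compat_r; [exact Hb | apply Rle_abs]. }
  split; exists eps; split; auto.
  - exact (near_right_end_sum_eq0_iff _ _ _ _ _ _ Hfw Heps Hdom Hremote _ Hx1 ltac:(lra)).
  - exact (near_left_end_sum_eq0_iff _ _ _ _ _ _ Hfw Heps Hdom Hremote _ Hy1 ltac:(lra)).
Qed.
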